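(* Let $A$ be a fuzzy ideal of a fuzzy Riesz space $(E,\mu)$ and let $T:E\rightarrow E/A$, $Tf=[f]$, be the canonical projection, where $E/A$ carries the fuzzy order $\nu$ described in the context. Then $T$ is a fuzzy Riesz homomorphism.
   Context: A fuzzy order on a real vector space $E$ is a map $\mu:E\times E\to[0,1]$ with $\mu(x,x)=1$; $\mu(x,y)+\mu(y,x)>1$ implies $x=y$; and $\mu(x,z)\ge\sup_{y}\min(\mu(x,y),\mu(y,z))$. Write $x\le y$ for $\mu(x,y)>\frac12$; suprema/infima are taken with respect to this relation. $(E,\mu)$ is a fuzzy ordered linear space if $\mu(x_1,x_2)>\frac12$ implies $\mu(x_1,x_2)\le\mu(x_1+x,x_2+x)$ for all $x$ and $\mu(x_1,x_2)\le\mu(\alpha x_1,\alpha x_2)$ for all $\alpha>0$; it is a fuzzy Riesz space if $x\vee y=\sup\{x,y\}$ and $x\wedge y=\inf\{x,y\}$ exist for all $x,y$. $|x|=x\vee(-x)$. A fuzzy ideal is a vector subspace $A$ such that $\mu(|x|,|y|)>\frac12$ and $y\in A$ imply $x\in A$. For $f\in E$, $[f]=f+A$, $E/A$ is the quotient vector space, and $\nu([f],[g])=1$ if $[f]=[g]$; $\nu([f],[g])=\frac23$ if $[f]\ne[g]$ and there exist $f_1\in[f]$, $g_1\in[g]$ with $\mu(f_1,g_1)>\frac12$; $\nu([f],[g])=0$ otherwise. $(E/A,\nu)$ is a fuzzy Riesz space. A fuzzy Riesz homomorphism is a linear map with $T(x\vee y)=Tx\vee Ty$. *)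

From HB Require Import structures.
From mathcomp Require Import all_boot all_order all_algebra.
From mathcomp Require Import boolp classical_sets reals.
Set Implicit Arguments. Unset Strict Implicit. Unset Printing Implicit Defensive.
Import Order.TTheory GRing.Theory Num.Theory.
Local Open Scope ring_scope.
Local Open Scope classical_set_scope.

Section FuzzyDefs.
Variables (R : realType) (E : lmodType R).

Definition fuzzy_order (T : Type) (mu : T -> T -> R) : Prop :=
  (forall x y, 0 <= mu x y <= 1) /\
  (forall x, mu x x = 1) /\
  (forall x y, mu x y + mu y x > 1 -> x = y) /\
  (forall x y z, Num.min (mu x y) (mu y z) <= mu x z).

Definition fle (T : Type) (mu : T -> T -> R) (x y : T) : Prop := mu x y > 2^-1.

Definition is_sup2 (T : Type) (mu : T -> T -> R) (dom : set T) (s x y : T) :=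
  dom s /\ fle mu x s /\ fle mu y s /\
  (forall u, dom u -> fle mu x u -> fle mu y u -> fle mu s u).

Definition is_inf2 (T : Type) (mu : T -> T -> R) (dom : set T) (s x y : T) :=
  dom s /\ fle mu s x /\ fle mu s y /\
  (forall u, dom u -> fle mu u x -> fle mu u y -> fle mu u s).

Definition fuzzy_ordered_linear_space (mu : E -> E -> R) : Prop :=
  fuzzy_order mu /\
  (forall x1 x2, fle mu x1 x2 ->
     (forall x, mu x1 x2 <= mu (x1 + x) (x2 + x)) /\
     (forall a : R, 0 < a -> mu x1 x2 <= mu (a *: x1) (a *: x2))).

Definition fuzzy_riesz_space (mu : E -> E -> R) : Prop :=
  fuzzy_ordered_linear_space mu /\
  (forall x y, exists s, is_sup2 mu setT s x y) /\
  (forall x y, exists i, is_inf2 mu setT i x y).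

Definition subspace (A : set E) : Prop :=
  A 0 /\ (forall x y, A x -> A y -> A (x + y)) /\
  (forall (a : R) x, A x -> A (a *: x)).

(* |x| = x \/ (-x); since suprema are unique, "ax = |x|" is is_sup2 mu setT ax x (-x) *)
Definition fuzzy_ideal (mu : E -> E -> R) (A : set E) : Prop :=
  subspace A /\
  (forall x y ax ay, is_sup2 mu setT ax x (- x) -> is_sup2 mu setT ay y (- y) ->
     fle mu ax ay -> A y -> A x).

(* E/A : elements are the cosets [f] = f + A, represented as subsets of E *)
Definition coset (A : set E) (f : E) : set E := [set g | A (g - f)].
Definition quot (A : set E) : set (set E) := range (coset A).

Definition qadd (A : set E) (C D : set E) : set E :=
  [set g | exists c d, C c /\ D d /\ A (g - (c + d))].
Definition qscale (A : set E) (a : R) (C : set E) : set E :=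
  [set g | exists c, C c /\ A (g - a *: c)].

Definition nu (mu : E -> E -> R) (C D : set E) : R :=
  if pselect (C = D) then 1
  else if pselect (exists f1 g1, C f1 /\ D g1 /\ mu f1 g1 > 2^-1) then 2 / 3
  else 0.

End FuzzyDefs.

From HB Require Import structures.
From mathcomp Require Import all_boot all_order all_algebra.
From mathcomp Require Import boolp classical_sets reals.
From mathcomp Require Import lra.
Import Order.TTheory GRing.Theory Num.Theory.
Local Open Scope ring_scope.
Local Open Scope classical_set_scope.
Set Implicit Arguments.
Unset Strict Implicit.

(* [f] <= [g] in E/A exactly when f <= g + c for some c in A.  Linearity of
   f |-> [f] is immediate, and [s] is an upper bound of [x], [y] with c = 0.
   For minimality, if x <= u + c1 and y <= u + c2 with c1, c2 in A, then
   c := |c1| + |c2| lies in A because A is an ideal, and dominates c1 and c2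
   since absolute values are positive; hence x, y <= u + c, so s <= u + c,
   i.e. [s] <= [u]. *)

Section FuzzyOrder.
Variables (R : realType) (T : Type) (mu : T -> T -> R).
Hypothesis mu_order : fuzzy_order mu.

Lemma fle_refl x : fle mu x x.
Proof. by rewrite /fle mu_order.2.1; lra. Qed.

Lemma fle_trans y x z : fle mu x y -> fle mu y z -> fle mu x z.
Proof.
rewrite /fle => lt_xy lt_yz; apply: lt_le_trans (mu_order.2.2.2 x y z).
by rewrite lt_min lt_xy lt_yz.
Qed.

End FuzzyOrder.

Section OrderedSpace.
Variables (R : realType) (E : lmodType R) (mu : E -> E -> R).
Hypothesis mu_ols : fuzzy_ordered_linear_space mu.
Let mu_order := mu_ols.1.

Lemma fle_add2r x a b : fle mu a b -> fle mu (a + x) (b + x).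
Proof. by move=> le_ab; apply: lt_le_trans le_ab ((mu_ols.2 a b le_ab).1 x). Qed.

Lemma fle_add2l x a b : fle mu a b -> fle mu (x + a) (x + b).
Proof. by rewrite ![x + _]addrC; apply: fle_add2r. Qed.

Lemma fle_scale (r : R) a b : 0 < r -> fle mu a b -> fle mu (r *: a) (r *: b).
Proof. by move=> r_gt0 le_ab; apply: lt_le_trans le_ab ((mu_ols.2 a b le_ab).2 r r_gt0). Qed.

Lemma fle_addr a b : fle mu 0 b -> fle mu a (a + b).
Proof. by move/(fle_add2l a); rewrite addr0. Qed.

(* 0 = c - c <= |c| - c <= |c| + |c|. *)
Lemma abs_ge0 a c : is_sup2 mu setT a c (- c) -> fle mu 0 a.
Proof.
move=> [_ [le_ca [le_Nca _]]].
have le_0_2a : fle mu 0 (a + a).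
  apply: (fle_trans mu_order (y := a - c)); first by rewrite -(subrr c); exact: fle_add2r.
  exact: fle_add2l.
have two_gt0 : (0 : R) < 2^-1 by rewrite invr_gt0.
have := fle_scale two_gt0 le_0_2a.
by rewrite scaler0 -mulr2n -scaler_nat scalerA mulVf ?pnatr_eq0 // scale1r.
Qed.

Lemma abs_idem a c : is_sup2 mu setT a c (- c) -> is_sup2 mu setT a a (- a).
Proof.
move=> /abs_ge0 ge0_a; split => //; split; first exact: fle_refl.
split; last by move=> u _ le_au _.
apply: (fle_trans mu_order _ ge0_a).
by move: (fle_add2r (- a) ge0_a); rewrite add0r subrr.
Qed.

End OrderedSpace.

Section Quotient.
Variables (R : realType) (E : lmodType R) (mu : E -> E -> R) (A : set E).
Hypothesis A_subspace : subspace A.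

Lemma subspace0 : A 0.
Proof. exact: A_subspace.1. Qed.

Lemma subspaceD x y : A x -> A y -> A (x + y).
Proof. exact: A_subspace.2.1. Qed.

Lemma subspaceZ (a : R) x : A x -> A (a *: x).
Proof. exact: A_subspace.2.2. Qed.

Lemma subspaceB x y : A x -> A y -> A (x - y).
Proof. by move=> Ax Ay; rewrite -scaleN1r; apply/subspaceD/subspaceZ. Qed.

Lemma coset_refl f : coset A f f.
Proof. by rewrite /coset /= subrr; exact: subspace0. Qed.

Lemma coset_add x y : coset A (x + y) = qadd A (coset A x) (coset A y).
Proof.
apply/seteqP; split => g; rewrite /coset /qadd /=.
  by move=> Ag; exists x, y; rewrite !subrr; split; [|split]; [exact: subspace0..|].
move=> [c [d [Acx [Adx Ag]]]]; rewrite -(subrKA (c + d)); apply: subspaceD => //.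
by rewrite opprD addrACA; exact: subspaceD.
Qed.

Lemma coset_scale (a : R) x : coset A (a *: x) = qscale A a (coset A x).
Proof.
apply/seteqP; split => g; rewrite /coset /qscale /=.
  by move=> Ag; exists x; split; first exact: coset_refl.
move=> [c [Acx Ag]]; rewrite -(subrKA (a *: c)); apply: subspaceD => //.
by rewrite -scalerBr; exact: subspaceZ.
Qed.

Hypothesis mu_ols : fuzzy_ordered_linear_space mu.

Lemma fle_nu_coset a b :
  fle (nu mu) (coset A a) (coset A b) <-> exists2 c, A c & fle mu a (b + c).
Proof.
rewrite /fle /nu; split.
  case: pselect => [eq_ab _|_] /=.
    exists (a - b); first by move: (coset_refl a); rewrite eq_ab.
    by rewrite subrKC; exact: (@fle_refl _ _ mu mu_ols.1 a).
  case: pselect => [[f [g [Af [Ag le_fg]]]] _|_] /=; last by lra.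
  (* a = f + (a - f) <= g + (a - f) = b + ((g - b) - (f - a)) *)
  exists ((g - b) - (f - a)); first exact: subspaceB.
  have -> : b + (g - b - (f - a)) = g + (a - f) by rewrite addrC opprB addrAC subrK.
  by rewrite -{1}(subrKC f a); apply: fle_add2r.
move=> [c Ac le_a_bc]; case: pselect => _ /=; first by lra.
case: pselect => [_|[]] /=; first by lra.
exists a, (b + c); split; first exact: coset_refl.
by split => //; rewrite /coset /= addrAC subrr add0r.
Qed.

End Quotient.

Section Ideal.
Variables (R : realType) (E : lmodType R) (mu : E -> E -> R) (A : set E).
Hypotheses (mu_riesz : fuzzy_riesz_space mu) (A_ideal : fuzzy_ideal mu A).
Let mu_ols := mu_riesz.1.
Let mu_order := mu_ols.1.

Lemma ideal_abs a c : is_sup2 mu setT a c (- c) -> A c -> A a.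
Proof.
move=> abs_c Ac; apply: (A_ideal.2 a c a a) Ac => //; last exact: fle_refl.
exact: abs_idem abs_c.
Qed.

Lemma ideal_common_bound c1 c2 :
  A c1 -> A c2 -> exists2 c, A c & fle mu c1 c /\ fle mu c2 c.
Proof.
move=> Ac1 Ac2; have [a1 abs_c1] := mu_riesz.2.1 c1 (- c1).
have [a2 abs_c2] := mu_riesz.2.1 c2 (- c2).
exists (a1 + a2).
  exact: (subspaceD A_ideal.1 (ideal_abs abs_c1 Ac1) (ideal_abs abs_c2 Ac2)).
split.
  apply: (fle_trans mu_order abs_c1.2.1).
  exact/fle_addr/(abs_ge0 mu_ols abs_c2).
apply: (fle_trans mu_order abs_c2.2.1); rewrite addrC.
exact/fle_addr/(abs_ge0 mu_ols abs_c1).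
Qed.

End Ideal.

Theorem theorem3p6 (R : realType) (E : lmodType R) (mu : E -> E -> R) (A : set E) :
  fuzzy_riesz_space mu -> fuzzy_ideal mu A ->
  (* T f = [f] is linear *)
  (forall x y : E, coset A (x + y) = qadd A (coset A x) (coset A y)) /\
  (forall (a : R) (x : E), coset A (a *: x) = qscale A a (coset A x)) /\
  (* T (x \/ y) = T x \/ T y, the join in E/A taken w.r.t. nu *)
  (forall x y s : E, is_sup2 mu setT s x y ->
     is_sup2 (nu mu) (quot A) (coset A s) (coset A x) (coset A y)).
Proof.
move=> mu_riesz A_ideal; have A_subspace := A_ideal.1.
have mu_ols := mu_riesz.1; have mu_order := mu_ols.1.
split; first exact: coset_add.
split; first exact: coset_scale.
move=> x y s [_ [le_xs [le_ys s_least]]].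
have below_coset f : fle mu f s -> fle (nu mu) (coset A f) (coset A s).
  by move=> le_fs; apply/(fle_nu_coset A_subspace mu_ols); exists 0;
    [exact: subspace0 | rewrite addr0].
split; first by exists s.
split; first exact: below_coset.
split; first exact: below_coset.
move=> _ [u _ <-] /(fle_nu_coset A_subspace mu_ols) [c1 Ac1 le_x]
                  /(fle_nu_coset A_subspace mu_ols) [c2 Ac2 le_y].
have [c Ac [le_c1 le_c2]] := ideal_common_bound mu_riesz A_ideal Ac1 Ac2.
apply/(fle_nu_coset A_subspace mu_ols); exists c => //.
apply: s_least => //.
  by apply: (fle_trans mu_order le_x); exact: fle_add2l.
by apply: (fle_trans mu_order le_y); exact: fle_add2l.
Qed.
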